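(* Let $\Pi_1,\Pi_2$ be propositional disjunctive programs and $A^+,A^-$ sets of atoms. Then $\Pi_1$ and $\Pi_2$ are relativized hyperequivalent w.r.t. $A^+$ and $A^-$ in the logic programming sense if and only if (viewed as propositional theories) they are relativized hyperequivalent w.r.t. $A^+$ and $A^-$.
   Context: A rule $r$ has the form $a_1\vee\dots\vee a_k\vee\neg a_{k+1}\vee\dots\vee\neg a_l\leftarrow b_1,\dots,b_m,\neg b_{m+1},\dots,\neg b_n$ with atoms $a_i,b_j$, $l\ge k\ge0$, $n\ge m\ge0$, $l+n>0$; $H^+(r)=\{a_1,..,a_k\}$, $H^-(r)=\{a_{k+1},..,a_l\}$, $B^+(r)=\{b_1,..,b_m\}$, $B^-(r)=\{b_{m+1},..,b_n\}$, and the body atoms are $B^+(r)\cup B^-(r)$. A program is a set of rules. A set $I$ of atoms satisfies $r$ iff $B^+(r)\subseteq I$ and $B^-(r)\cap I=\emptyset$ imply $I\cap H^+(r)\ne\emptyset$ or $H^-(r)\not\subseteq I$. The reduct $\Pi^I$ consists of the rules $a_1\vee\dots\vee a_k\leftarrow b_1,\dots,b_m$ for those rules of $\Pi$ with $H^-(r)\subseteq I$ and $B^-(r)\cap I=\emptyset$; $I$ is an answer set of $\Pi$ iff $I$ satisfies $\Pi^I$ and is subset-minimal with this property. $\Pi_1,\Pi_2$ are relativized hyperequivalent w.r.t. $A^+,A^-$ in the logic programming sense iff for every program $\Pi$ whose rules satisfy $H^-(r)=\emptyset$, $H^+(r)\subseteq A^+$ and all body atoms in $A^-$, the programs $\Pi_1\cup\Pi$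 and $\Pi_2\cup\Pi$ have the same answer sets. As theories, a rule is read as the formula $\beta_r\to\alpha_r$, with $\alpha_r$ the disjunction of the head literals ($\bot$ if empty), $\beta_r$ the conjunction of body literals ($\top=\bot\to\bot$ if empty), and $\neg p$ meaning $p\to\bot$. HT-interpretations $(X,Y)$, $X\subseteq Y$; $(X,Y)\models a$ iff $a\in X$; $(X,Y)\not\models\bot$; $\wedge,\vee$ componentwise; $(X,Y)\models\phi\to\psi$ iff ((X,Y)$\not\models\phi$ or $(X,Y)\models\psi$) and $Y\models\phi\to\psi$ classically. $Y$ is an answer set of a theory $\Gamma$ iff $(Y,Y)\models\Gamma$ and no $X\subsetneq Y$ has $(X,Y)\models\Gamma$. Polarity of occurrences: the occurrence of $\phi$ in itself is positive; subformulas of a positive (negative) $\wedge$/$\vee$-occurrence inherit its polarity; in an occurrence of $\psi_1\to\psi_2$, $\psi_1$ is negative and $\psi_2$ positive, and if the occurrence is negative additionally $\psi_1$ is positive and $\psi_2$ negative. An $A^+$-$A^-$-theory is a theory over $A^+\cup A^-$ whose positive atom occurrences are in $A^+$ and negative atom occurrences in $A^-$ ($\bot$ unrestricted). Theories $\Gamma_1,\Gamma_2$ are relativized hyperequivalent w.r.t. $A^+,A^-$ iff for every $A^+$-$A^-$-theory $\Gamma$, $\Gamma_1\cup\Gamma$ and $\Gamma_2\cup\Gamma$ have the same answer sets. *)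

From Stdlib Require Import List.
Import ListNotations.
Set Implicit Arguments.

Section Defs.
Variable atom : Type.

Definition aset := atom -> Prop.
Definition subset (X Y : aset) : Prop := forall a, X a -> Y a.
Definition psubset (X Y : aset) : Prop := subset X Y /\ ~ subset Y X.

(* a rule  a1 v .. v ak v ~a_{k+1} v .. v ~a_l <- b1,..,bm, ~b_{m+1},..,~b_n *)
Record rule := mkRule { Hpos : list atom; Hneg : list atom; Bpos : list atom; Bneg : list atom }.

Definition rule_wf (r : rule) : Prop :=
  Hpos r <> [] \/ Hneg r <> [] \/ Bpos r <> [] \/ Bneg r <> [].

Definition program := rule -> Prop.
Definition is_program (P : program) : Prop := forall r, P r -> rule_wf r.

Definition lsub (l : list atom) (I : aset) : Prop := forall a, In a l -> I a.
Definition ldisj (l : list atom) (I : aset) : Prop := forall a, In a l -> ~ I a.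
Definition lmeets (l : list atom) (I : aset) : Prop := exists a, In a l /\ I a.

Definition sat_rule (I : aset) (r : rule) : Prop :=
  lsub (Bpos r) I -> ldisj (Bneg r) I -> lmeets (Hpos r) I \/ ~ lsub (Hneg r) I.

Definition sat_prog (I : aset) (P : program) : Prop := forall r, P r -> sat_rule I r.

Definition reduct (P : program) (I : aset) : program :=
  fun r' => exists r, P r /\ lsub (Hneg r) I /\ ldisj (Bneg r) I /\
            r' = mkRule (Hpos r) [] (Bpos r) [].

Definition lp_answer_set (P : program) (I : aset) : Prop :=
  sat_prog I (reduct P I) /\ ~ (exists J, psubset J I /\ sat_prog J (reduct P I)).

Definition prog_union (P Q : program) : program := fun r => P r \/ Q r.

Definition lp_context (Ap Am : aset) (P : program) : Prop :=
  is_program P /\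
  forall r, P r -> Hneg r = [] /\ lsub (Hpos r) Ap /\ lsub (Bpos r) Am /\ lsub (Bneg r) Am.

Definition lp_rel_hyperequiv (P1 P2 : program) (Ap Am : aset) : Prop :=
  forall P, lp_context Ap Am P ->
    forall I, lp_answer_set (prog_union P1 P) I <-> lp_answer_set (prog_union P2 P) I.

Inductive form :=
| FAtom : atom -> form
| FBot : form
| FAnd : form -> form -> form
| FOr : form -> form -> form
| FImp : form -> form -> form.

Definition FNeg (p : form) : form := FImp p FBot.
Definition FTop : form := FImp FBot FBot.

Fixpoint bigOr (l : list form) : form :=
  match l with
  | [] => FBot
  | [x] => x
  | x :: xs => FOr x (bigOr xs)
  end.

Fixpoint bigAnd (l : list form) : form :=
  match l with
  | [] => FTop
  | [x] => x
  | x :: xs => FAnd x (bigAnd xs)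
  end.

Definition rule_formula (r : rule) : form :=
  FImp (bigAnd (map FAtom (Bpos r) ++ map (fun b => FNeg (FAtom b)) (Bneg r)))
       (bigOr (map FAtom (Hpos r) ++ map (fun a => FNeg (FAtom a)) (Hneg r))).

Definition theory := form -> Prop.
Definition theory_of (P : program) : theory := fun f => exists r, P r /\ f = rule_formula r.
Definition th_union (T U : theory) : theory := fun f => T f \/ U f.

Fixpoint csat (Y : aset) (f : form) : Prop :=
  match f with
  | FAtom a => Y a
  | FBot => False
  | FAnd f g => csat Y f /\ csat Y g
  | FOr f g => csat Y f \/ csat Y g
  | FImp f g => csat Y f -> csat Y g
  end.

Fixpoint htsat (X Y : aset) (f : form) : Prop :=
  match f with
  | FAtom a => X a
  | FBot => False
  | FAnd f g => htsat X Y f /\ htsat X Y g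
  | FOr f g => htsat X Y f \/ htsat X Y g
  | FImp f g => (~ htsat X Y f \/ htsat X Y g) /\ csat Y (FImp f g)
  end.

Definition ht_model (X Y : aset) (T : theory) : Prop := forall f, T f -> htsat X Y f.

Definition th_answer_set (T : theory) (Y : aset) : Prop :=
  ht_model Y Y T /\ ~ (exists X, psubset X Y /\ ht_model X Y T).

(* polarity check: [pol_ok Ap Am pos f] holds iff every atom occurrence of f
   that is positive (resp. negative), when f itself occurs with polarity
   [pos] (true = positive), lies in Ap (resp. Am). *)
Fixpoint pol_ok (Ap Am : aset) (pos : bool) (f : form) : Prop :=
  match f with
  | FAtom a => if pos then Ap a else Am a
  | FBot => True
  | FAnd f g => pol_ok Ap Am pos f /\ pol_ok Ap Am pos g
  | FOr f g => pol_ok Ap Am pos f /\ pol_ok Ap Am pos g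
  | FImp f g =>
      if pos then pol_ok Ap Am false f /\ pol_ok Ap Am true g
      else (pol_ok Ap Am false f /\ pol_ok Ap Am true g) /\
           (pol_ok Ap Am true f /\ pol_ok Ap Am false g)
  end.

Fixpoint atoms_in (S : aset) (f : form) : Prop :=
  match f with
  | FAtom a => S a
  | FBot => True
  | FAnd f g | FOr f g | FImp f g => atoms_in S f /\ atoms_in S g
  end.

Definition ApAm_theory (Ap Am : aset) (T : theory) : Prop :=
  forall f, T f -> atoms_in (fun a => Ap a \/ Am a) f /\ pol_ok Ap Am true f.

Definition th_rel_hyperequiv (T1 T2 : theory) (Ap Am : aset) : Prop :=
  forall T, ApAm_theory Ap Am T ->
    forall Y, th_answer_set (th_union T1 T) Y <-> th_answer_set (th_union T2 T) Y.

End Defs.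

(* For X ⊆ Y, the HT-interpretation (X, Y) satisfies the formula of a rule iff Y satisfies
   the rule classically and X satisfies its reduct w.r.t. Y.  Hence a program and its theory
   have the same answer sets, and whether Y is an answer set of a union depends only on the
   HT-models (X, Y), X ⊆ Y, of the parts.  Each direction therefore trades a context of one
   kind for one of the other kind with the same HT-models below Y.

   A program context P has the same HT-models below Y as its reduct P^Y, a positive program
   whose theory is an A+-A- theory.  Conversely, let T be an A+-A- theory with model Y.  By
   the polarity restriction, (X, Y) |= f persists when X grows on A+-atoms and shrinks on
   A--atoms.  So for each f in T and each countermodel (X0, Y) of f, the positive rule H <- B,
   with B the A--atoms of f in X0 and H the A+-atoms of f in Y \ X0, is satisfied by every
   model (X, Y) of f, while the countermodel (X, Y) of f violates the rule it generates.
   These rules form a program context with the same HT-models below Y as T. *)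

From Stdlib Require Import List Classical.
Import ListNotations.
Set Implicit Arguments.

Section RelativizedHyperequivalence.
Variable atom : Type.
Implicit Types (X Y : aset atom) (f g : form atom) (l : list (form atom)) (r : rule atom)
  (P Q : program atom) (T U : theory atom) (Ap Am : aset atom).

Lemma subset_refl Y : subset Y Y.
Proof. intros a Ya; exact Ya. Qed.

Lemma not_lsub (l : list atom) (I : aset atom) : ~ lsub l I <-> exists a, In a l /\ ~ I a.
Proof.
  split.
  - intros Hl. apply NNPP; intros Hex. apply Hl; intros a Ha.
    apply NNPP; intros Ia. apply Hex; exists a; auto.
  - intros [a [Ha Ia]] Hl. apply Ia, Hl, Ha.
Qed.

Lemma htsat_diag Y f : htsat Y Y f <-> csat Y f.
Proof.
  induction f as [a| |f1 IH1 f2 IH2|f1 IH1 f2 IH2|f1 IH1 f2 IH2]; simpl; [tauto..|].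
  rewrite IH1, IH2. destruct (classic (csat Y f1)); tauto.
Qed.

Lemma htsat_neg_atom X Y : subset X Y -> forall a, htsat X Y (FNeg (FAtom a)) <-> ~ Y a.
Proof. intros XY a; simpl. specialize (XY a). tauto. Qed.

Lemma ht_bigAnd X Y l : htsat X Y (bigAnd l) <-> forall g, In g l -> htsat X Y g.
Proof.
  induction l as [|x [|y ys] IH].
  - simpl. tauto.
  - simpl. split; [intros H g [<-|[]]; exact H | intros H; apply H; auto].
  - change (bigAnd (x :: y :: ys)) with (FAnd x (bigAnd (y :: ys))).
    simpl htsat at 1. rewrite IH. simpl. firstorder congruence.
Qed.

Lemma ht_bigOr X Y l : htsat X Y (bigOr l) <-> exists g, In g l /\ htsat X Y g.
Proof.
  induction l as [|x [|y ys] IH].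
  - simpl. firstorder.
  - simpl. split; [intros H; exists x; auto | intros [g [[<-|[]] H]]; exact H].
  - change (bigOr (x :: y :: ys)) with (FOr x (bigOr (y :: ys))).
    simpl htsat at 1. rewrite IH. simpl. firstorder congruence.
Qed.

Lemma bigAnd_closed (Phi : form atom -> Prop) l :
  Phi (FTop atom) -> (forall f g, Phi f -> Phi g -> Phi (FAnd f g)) ->
  (forall g, In g l -> Phi g) -> Phi (bigAnd l).
Proof.
  intros Htop Hand.
  induction l as [|x [|y ys] IH]; intros Hl; simpl; [exact Htop | apply Hl; left; reflexivity |].
  apply Hand; [apply Hl; left; reflexivity | apply IH; intros g Hg; apply Hl; right; exact Hg].
Qed.

Lemma bigOr_closed (Phi : form atom -> Prop) l :
  Phi (@FBot atom) -> (forall f g, Phi f -> Phi g -> Phi (FOr f g)) ->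
  (forall g, In g l -> Phi g) -> Phi (bigOr l).
Proof.
  intros Hbot Hor.
  induction l as [|x [|y ys] IH]; intros Hl; simpl; [exact Hbot | apply Hl; left; reflexivity |].
  apply Hor; [apply Hl; left; reflexivity | apply IH; intros g Hg; apply Hl; right; exact Hg].
Qed.

Definition rule_body r : form atom :=
  bigAnd (map (@FAtom atom) (Bpos r) ++ map (fun b => FNeg (FAtom b)) (Bneg r)).
Definition rule_head r : form atom :=
  bigOr (map (@FAtom atom) (Hpos r) ++ map (fun a => FNeg (FAtom a)) (Hneg r)).

Lemma ht_rule_body X Y r : subset X Y ->
  htsat X Y (rule_body r) <-> lsub (Bpos r) X /\ ldisj (Bneg r) Y.
Proof.
  intros XY. unfold rule_body.
  rewrite ht_bigAnd, <- Forall_forall, Forall_app, !Forall_map, !Forall_forall.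
  setoid_rewrite (htsat_neg_atom XY). reflexivity.
Qed.

Lemma ht_rule_head X Y r : subset X Y ->
  htsat X Y (rule_head r) <-> lmeets (Hpos r) X \/ ~ lsub (Hneg r) Y.
Proof.
  intros XY. unfold rule_head.
  rewrite ht_bigOr, <- Exists_exists, Exists_app, !Exists_map, !Exists_exists, not_lsub.
  setoid_rewrite (htsat_neg_atom XY). reflexivity.
Qed.

Lemma csat_rule Y r : csat Y (rule_formula r) <-> sat_rule Y r.
Proof.
  change ((csat Y (rule_body r) -> csat Y (rule_head r)) <-> sat_rule Y r).
  rewrite <- !htsat_diag, ht_rule_body, ht_rule_head by apply subset_refl.
  unfold sat_rule. tauto.
Qed.

Lemma ht_rule X Y r : subset X Y ->
  htsat X Y (rule_formula r) <-> sat_rule Y r /\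
    (lsub (Hneg r) Y -> ldisj (Bneg r) Y -> lsub (Bpos r) X -> lmeets (Hpos r) X).
Proof.
  intros XY.
  change (htsat X Y (rule_formula r)) with
    ((~ htsat X Y (rule_body r) \/ htsat X Y (rule_head r)) /\ csat Y (rule_formula r)).
  rewrite csat_rule, ht_rule_body, ht_rule_head by exact XY.
  destruct (classic (lsub (Bpos r) X /\ ldisj (Bneg r) Y));
    destruct (classic (lsub (Hneg r) Y)); tauto.
Qed.

Lemma ht_pos_rule X Y r : Hneg r = [] -> Bneg r = [] -> subset X Y ->
  htsat X Y (rule_formula r) <->
    (lsub (Bpos r) Y -> lmeets (Hpos r) Y) /\ (lsub (Bpos r) X -> lmeets (Hpos r) X).
Proof.
  intros Hn Bn XY. rewrite ht_rule by exact XY. unfold sat_rule. rewrite Hn, Bn.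
  assert (Hs : lsub [] Y) by (intros a []). assert (Hd : ldisj [] Y) by (intros a []).
  tauto.
Qed.

Lemma sat_reduct X Y P : sat_prog X (reduct P Y) <->
  forall r, P r -> lsub (Hneg r) Y -> ldisj (Bneg r) Y -> lsub (Bpos r) X -> lmeets (Hpos r) X.
Proof.
  unfold sat_prog, sat_rule. split.
  - intros H r Pr Hs Hd Hb.
    destruct (H (mkRule (Hpos r) [] (Bpos r) [])) as [Hm | Hn]; simpl.
    + exists r; repeat split; assumption.
    + exact Hb.
    + intros a [].
    + exact Hm.
    + exfalso; apply Hn; intros a [].
  - intros H r' [r [Pr [Hs [Hd ->]]]] Hb _. left. exact (H r Pr Hs Hd Hb).
Qed.

Lemma sat_reduct_self Y P : sat_prog Y (reduct P Y) <-> sat_prog Y P.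
Proof.
  rewrite sat_reduct. unfold sat_prog, sat_rule. split.
  - intros H r Pr Hb Hd. destruct (classic (lsub (Hneg r) Y)); auto.
  - intros H r Pr Hs Hd Hb. destruct (H r Pr Hb Hd); tauto.
Qed.

Lemma sat_reduct_reduct X Y Z P :
  sat_prog X (reduct (reduct P Y) Z) <-> sat_prog X (reduct P Y).
Proof.
  rewrite !sat_reduct. split.
  - intros H r Pr Hs Hd Hb.
    apply (H (mkRule (Hpos r) [] (Bpos r) []));
      [exists r; repeat split; assumption | intros a [] | intros a [] | exact Hb].
  - intros H r' [r [Pr [Hs [Hd ->]]]] _ _ Hb. exact (H r Pr Hs Hd Hb).
Qed.

Lemma ht_model_theory_of X Y P : subset X Y ->
  ht_model X Y (theory_of P) <-> sat_prog Y P /\ sat_prog X (reduct P Y).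
Proof.
  intros XY. rewrite sat_reduct. unfold ht_model, theory_of, sat_prog. split.
  - intros H; split; intros r Pr; specialize (H _ (ex_intro _ r (conj Pr eq_refl)));
      apply ht_rule in H; tauto.
  - intros [H1 H2] f [r [Pr ->]]. apply ht_rule; auto.
Qed.

Lemma lp_answer_set_theory_of P Y : lp_answer_set P Y <-> th_answer_set (theory_of P) Y.
Proof.
  unfold lp_answer_set, th_answer_set.
  rewrite ht_model_theory_of, sat_reduct_self by apply subset_refl.
  split; intros [HY Hmin]; (split; [tauto |]); intros [X [HX HXY]]; apply Hmin;
    exists X; (split; [exact HX |]).
  - apply ht_model_theory_of in HXY; [tauto | apply HX].
  - apply ht_model_theory_of; [apply HX | tauto].
Qed.

Lemma th_answer_set_ext T U Y :
  (forall X, subset X Y -> ht_model X Y T <-> ht_model X Y U) ->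
  th_answer_set T Y <-> th_answer_set U Y.
Proof.
  intros E. unfold th_answer_set. rewrite (E Y (subset_refl Y)).
  split; intros [HY Hmin]; split; try exact HY; intros [X [HX HXY]]; apply Hmin; exists X;
    split; try exact HX; apply (E X (proj1 HX)); exact HXY.
Qed.

Lemma ht_model_th_union X Y T U :
  ht_model X Y (th_union T U) <-> ht_model X Y T /\ ht_model X Y U.
Proof. unfold ht_model, th_union. firstorder. Qed.

Lemma ht_model_prog_union X Y P Q :
  ht_model X Y (theory_of (prog_union P Q)) <->
  ht_model X Y (theory_of P) /\ ht_model X Y (theory_of Q).
Proof.
  unfold ht_model, theory_of, prog_union. split.
  - intros H; split; intros f [r [Pr ->]]; apply H; exists r; auto.
  - intros [H1 H2] f [r [[Pr | Pr] ->]]; [apply H1 | apply H2]; exists r; auto.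
Qed.

Lemma lp_answer_set_union_context Q C T Y :
  (forall X, subset X Y -> ht_model X Y (theory_of C) <-> ht_model X Y T) ->
  lp_answer_set (prog_union Q C) Y <-> th_answer_set (th_union (theory_of Q) T) Y.
Proof.
  intros E. rewrite lp_answer_set_theory_of. apply th_answer_set_ext. intros X XY.
  rewrite ht_model_prog_union, ht_model_th_union, (E X XY). reflexivity.
Qed.

Lemma ht_model_reduct X Y P : subset X Y ->
  ht_model X Y (theory_of (reduct P Y)) <-> ht_model X Y (theory_of P).
Proof.
  intros XY. rewrite !ht_model_theory_of by exact XY.
  rewrite sat_reduct_self, sat_reduct_reduct. reflexivity.
Qed.

Lemma pol_ok_atoms_in Ap Am p f : pol_ok Ap Am p f -> atoms_in (fun a => Ap a \/ Am a) f.
Proof.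
  revert p. induction f as [a| |f1 IH1 f2 IH2|f1 IH1 f2 IH2|f1 IH1 f2 IH2];
    intros [|] Hp; simpl in *; firstorder.
Qed.

Lemma pol_ok_pos_rule Ap Am (H B : list atom) : lsub H Ap -> lsub B Am ->
  pol_ok Ap Am true (rule_formula (mkRule H [] B [])).
Proof.
  intros HH HB. unfold rule_formula; simpl; rewrite !app_nil_r. split.
  - apply bigAnd_closed; [simpl; tauto | simpl; tauto |].
    intros g Hg. apply in_map_iff in Hg as [a [<- Ha]]. apply HB, Ha.
  - apply bigOr_closed; [simpl; tauto | simpl; tauto |].
    intros g Hg. apply in_map_iff in Hg as [a [<- Ha]]. apply HH, Ha.
Qed.

Lemma reduct_ApAm_theory Ap Am P Y :
  lp_context Ap Am P -> ApAm_theory Ap Am (theory_of (reduct P Y)).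
Proof.
  intros [_ HP] f [r' [[r [Pr [_ [_ ->]]]] ->]]. destruct (HP r Pr) as [_ [HH [HB _]]].
  assert (Hpol := pol_ok_pos_rule HH HB). split; [eapply pol_ok_atoms_in |]; exact Hpol.
Qed.

Lemma th_to_lp P1 P2 Ap Am :
  th_rel_hyperequiv (theory_of P1) (theory_of P2) Ap Am -> lp_rel_hyperequiv P1 P2 Ap Am.
Proof.
  intros Hyp P HP Y.
  assert (E : forall X, subset X Y ->
            ht_model X Y (theory_of P) <-> ht_model X Y (theory_of (reduct P Y)))
    by (intros X XY; symmetry; apply ht_model_reduct, XY).
  rewrite !(lp_answer_set_union_context _ E). apply Hyp, (reduct_ApAm_theory HP).
Qed.

Fixpoint atoms f : list atom :=
  match f with
  | FAtom a => [a]
  | FBot _ => []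
  | FAnd g h | FOr g h | FImp g h => atoms g ++ atoms h
  end.

Lemma htsat_polarity_mono Ap Am X X' Y f :
  (forall a, In a (atoms f) -> (Ap a -> X a -> X' a) /\ (Am a -> X' a -> X a)) ->
  (pol_ok Ap Am true f -> htsat X Y f -> htsat X' Y f) /\
  (pol_ok Ap Am false f -> htsat X' Y f -> htsat X Y f).
Proof.
  induction f as [a| |f1 IH1 f2 IH2|f1 IH1 f2 IH2|f1 IH1 f2 IH2]; simpl; intros Hat;
    [destruct (Hat a (or_introl eq_refl)); tauto | tauto | ..];
    specialize (IH1 (fun a Ha => Hat a (in_or_app _ _ _ (or_introl Ha))));
    specialize (IH2 (fun a Ha => Hat a (in_or_app _ _ _ (or_intror Ha)))); tauto.
Qed.

Lemma list_filter_prop (xs : list atom) (S : aset atom) :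
  exists ys : list atom, forall a, In a ys <-> In a xs /\ S a.
Proof.
  induction xs as [|x xs [ys IH]].
  - exists []; simpl; tauto.
  - destruct (classic (S x)) as [Sx | nSx].
    + exists (x :: ys). intros a; simpl; rewrite IH.
      split; [intros [<- | Ha] | intros [[<- | Ha] Sa]]; tauto.
    + exists ys. intros a; simpl; rewrite IH.
      split; [| intros [[<- | Ha] Sa]]; tauto.
Qed.

Section CountermodelProgram.
Variables (Ap Am : aset atom) (T : theory atom) (Y : aset atom).
Hypothesis HT : ApAm_theory Ap Am T.
Hypothesis HYT : ht_model Y Y T.

Definition countermodel_rule f X0 r : Prop :=
  Hneg r = [] /\ Bneg r = [] /\
  (forall a, In a (Bpos r) <-> In a (atoms f) /\ X0 a /\ Am a) /\
  (forall a, In a (Hpos r) <-> In a (atoms f) /\ Y a /\ ~ X0 a /\ Ap a).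

Lemma countermodel_rule_exists f X0 : exists r, countermodel_rule f X0 r.
Proof.
  destruct (list_filter_prop (atoms f) (fun a => X0 a /\ Am a)) as [B EB].
  destruct (list_filter_prop (atoms f) (fun a => Y a /\ ~ X0 a /\ Ap a)) as [H EH].
  exists (mkRule H [] B []). exact (conj eq_refl (conj eq_refl (conj EB EH))).
Qed.

Lemma countermodel_rule_sound f X0 X r :
  pol_ok Ap Am true f -> subset X Y -> ~ htsat X0 Y f -> htsat X Y f ->
  countermodel_rule f X0 r -> lsub (Bpos r) X -> lmeets (Hpos r) X.
Proof.
  intros Hpol XY Hn Hf [_ [_ [EB EH]]] HB. apply NNPP; intros Hmiss. apply Hn.
  refine (proj1 (htsat_polarity_mono Ap Am X X0 Y f _) Hpol Hf). intros a Ha. split.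
  - intros Hap Xa. apply NNPP; intros X0a. apply Hmiss.
    exists a. split; [apply EH; auto | exact Xa].
  - intros Ham X0a. apply HB, EB. auto.
Qed.

Definition countermodel_program : program atom :=
  fun r => exists f X0, T f /\ subset X0 Y /\ ~ htsat X0 Y f /\ countermodel_rule f X0 r.

Lemma ht_model_countermodel_program X : subset X Y ->
  ht_model X Y (theory_of countermodel_program) <-> ht_model X Y T.
Proof.
  intros XY. split.
  - intros H f Tf. apply NNPP; intros Hnf.
    destruct (countermodel_rule_exists f X) as [r Hr].
    pose proof Hr as [Hn [Bn [EB EH]]].
    assert (Hsat : htsat X Y (rule_formula r))
      by (apply H; exists r; split; [exists f, X; auto | reflexivity]).
    apply ht_pos_rule in Hsat as [_ HX]; auto.
    destruct HX as [a [Ha Xa]]; [intros a Ha; apply EB, Ha |].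
    apply EH in Ha. tauto.
  - intros H g [r [[f [X0 [Tf [X0Y [Hnf Hr]]]]] ->]].
    pose proof Hr as [Hn [Bn _]].
    apply ht_pos_rule; auto. split; intros HB.
    + apply (countermodel_rule_sound (proj2 (HT Tf)) (subset_refl Y) Hnf (HYT Tf) Hr HB).
    + apply (countermodel_rule_sound (proj2 (HT Tf)) XY Hnf (H f Tf) Hr HB).
Qed.

Lemma countermodel_program_context : lp_context Ap Am countermodel_program.
Proof.
  split.
  - intros r [f [X0 [Tf [X0Y [Hnf Hr]]]]]. left. intros Hnil.
    pose proof Hr as [_ [_ [EB _]]].
    assert (HB : lsub (Bpos r) Y) by (intros a Ha; apply X0Y, EB, Ha).
    destruct (countermodel_rule_sound (proj2 (HT Tf)) (subset_refl Y) Hnf (HYT Tf) Hr HB)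
      as [a [Ha _]].
    rewrite Hnil in Ha. destruct Ha.
  - intros r [f [X0 [_ [_ [_ [Hn [Bn [EB EH]]]]]]]]. repeat split.
    + exact Hn.
    + intros a Ha; apply EH, Ha.
    + intros a Ha; apply EB, Ha.
    + rewrite Bn; intros a [].
Qed.

End CountermodelProgram.

Lemma lp_to_th_answer_set P1 P2 Ap Am T Y :
  lp_rel_hyperequiv P1 P2 Ap Am -> ApAm_theory Ap Am T ->
  th_answer_set (th_union (theory_of P1) T) Y -> th_answer_set (th_union (theory_of P2) T) Y.
Proof.
  intros Hyp HT HAS.
  assert (HYT : ht_model Y Y T) by (intros f Tf; apply (proj1 HAS); right; exact Tf).
  pose proof (ht_model_countermodel_program HT HYT) as E.
  rewrite <- (lp_answer_set_union_context _ E).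
  apply Hyp; [exact (countermodel_program_context HT HYT) |].
  apply (lp_answer_set_union_context _ E), HAS.
Qed.

Lemma lp_rel_hyperequiv_sym P1 P2 Ap Am :
  lp_rel_hyperequiv P1 P2 Ap Am -> lp_rel_hyperequiv P2 P1 Ap Am.
Proof. intros Hyp P HP I. symmetry. apply Hyp, HP. Qed.

Lemma lp_to_th P1 P2 Ap Am :
  lp_rel_hyperequiv P1 P2 Ap Am -> th_rel_hyperequiv (theory_of P1) (theory_of P2) Ap Am.
Proof.
  intros Hyp T HT Y.
  split; eapply lp_to_th_answer_set; eauto using lp_rel_hyperequiv_sym.
Qed.

End RelativizedHyperequivalence.

Theorem mainTheorem13 (atom : Type) (P1 P2 : program atom) (Ap Am : aset atom) :
  is_program P1 -> is_program P2 ->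
  (lp_rel_hyperequiv P1 P2 Ap Am <->
   th_rel_hyperequiv (theory_of P1) (theory_of P2) Ap Am).
Proof.
  intros _ _. split; [apply lp_to_th | apply th_to_lp].
Qed.
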